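(* Let $\mathcal{P}$ be a poset with at least two elements that has the Unique Cover Twin Property. Then for every $n\ge 2$, $\lceil\log_2 n\rceil\le \mathrm{isat}(n,\mathcal{P})$.
   Context: In a poset $(P,\le)$, $y$ covers $x$ if $x<y$ and there is no $z$ with $x<z<y$. A poset $\mathcal{P}=(P,\le)$ has the Unique Cover Twin Property (UCTP) if for every $S\in P$ that has exactly one cover $T\in P$, there exists $S'\in P$ with $S'\ne S$ such that $T$ also covers $S'$. $\mathcal{B}_n$ denotes the Boolean lattice $(2^{[n]},\subseteq)$. A family $\mathcal{F}\subseteq 2^{[n]}$ (ordered by inclusion) is induced-$\mathcal{P}$-saturated if it contains no induced copy of $\mathcal{P}$ (an injection $f$ with $u\le v\iff f(u)\subseteq f(v)$) but every family $\mathcal{F}'$ with $\mathcal{F}\subsetneq\mathcal{F}'\subseteq 2^{[n]}$ contains one. $\mathrm{isat}(n,\mathcal{P})$ is the minimum size of an induced-$\mathcal{P}$-saturated family in $\mathcal{B}_n$ (equal to $2^n$ if $\mathcal{P}$ is not an induced subposet of $\mathcal{B}_n$). *)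

From HB Require Import structures.
From mathcomp Require Import all_boot all_order.
Set Implicit Arguments. Unset Strict Implicit. Unset Printing Implicit Defensive.
Import Order.POrderTheory.
Local Open Scope order_scope.

Definition covers d (P : finPOrderType d) (x y : P) : bool :=
  (x < y) && [forall z : P, ~~ ((x < z) && (z < y))].

Definition UCTP d (P : finPOrderType d) : Prop :=
  forall S T : P, covers S T -> (forall T' : P, covers S T' -> T' = T) ->
    exists S' : P, S' != S /\ covers S' T.

Definition has_induced_copy d (P : finPOrderType d) (n : nat)
    (F : {set {set 'I_n}}) : bool :=
  [exists f : {ffun P -> {set 'I_n}},
     [&& injectiveb f,
         [forall u : P, forall v : P, (u <= v) == (f u \subset f v)]
       & [forall u : P, f u \in F]]].

Definition induced_saturated d (P : finPOrderType d) (n : nat)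
    (F : {set {set 'I_n}}) : bool :=
  ~~ has_induced_copy P F &&
  [forall F' : {set {set 'I_n}}, (F \proper F') ==> has_induced_copy P F'].

(* isat(n,P): minimum size of an induced-P-saturated family (2^n if none) *)
Definition isat d (P : finPOrderType d) (n : nat) : nat :=
  \big[minn/2 ^ n]_(F : {set {set 'I_n}} | induced_saturated P F) #|F|.

(* A saturated family F must separate any two points i != j of [n]; since the
   traces [set A in F | i \in A] are then pairwise distinct subsets of F, we get
   n <= 2 ^ #|F|.  To separate, pick A in F extremal among the members avoiding
   i (or among all members) and let X be A with i added (resp. removed).  X is
   not in F, and every other member of F compares with X exactly as with A.
   Saturation gives an induced copy of P in X |: F through X: if A is not in
   the copy, swapping X for A yields a copy inside F; if it is, the two
   preimages are comparable twins of P, which UCTP forbids. *)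

From HB Require Import structures.
From mathcomp Require Import all_boot all_order.
Set Implicit Arguments. Unset Strict Implicit. Unset Printing Implicit Defensive.
Import Order.POrderTheory.

Section Twins.
Local Open Scope order_scope.
Variables (d : Order.disp_t) (P : finPOrderType d).
Hypothesis UCTP_P : UCTP P.

Definition order_twins (x y : P) : Prop :=
  forall z, z != x -> z != y -> (z <= x) = (z <= y) /\ (x <= z) = (y <= z).

(* [y] is the unique cover of [x]; any twin of [x] below [y] would lie below
   [x] and so could not be covered by [y]. *)
Lemma UCTP_no_twins_lt x y : x < y -> order_twins x y -> False.
Proof.
move=> lt_xy twins.
have cov_xy : covers x y.
  apply/andP; split=> //; apply/forallP => z; apply/negP => /andP[lt_xz lt_zy].
  have [eq_le_z _] := twins z (negbT (gt_eqF lt_xz)) (negbT (lt_eqF lt_zy)).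
  by move: (ltW lt_zy); rewrite -eq_le_z => /(lt_le_trans lt_xz); rewrite ltxx.
have uniq_cov T : covers x T -> T = y.
  case/andP => lt_xT /forallP noz; apply/eqP; apply: contraT => neq_Ty.
  have [_ le_xT] := twins T (negbT (gt_eqF lt_xT)) neq_Ty.
  have lt_yT : y < T by rewrite lt_neqAle eq_sym neq_Ty -le_xT ltW.
  by move: (noz y); rewrite lt_xy lt_yT.
have [S [neq_Sx /andP[lt_Sy /forallP noz]]] := UCTP_P cov_xy uniq_cov.
have [le_Sx _] := twins S neq_Sx (negbT (lt_eqF lt_Sy)).
have lt_Sx : S < x by rewrite lt_neqAle neq_Sx le_Sx ltW.
by move: (noz x); rewrite lt_Sx lt_xy.
Qed.

Lemma UCTP_no_comparable_twins x y :
  x != y -> x >=< y -> order_twins x y -> False.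
Proof.
move=> neq_xy; case/orP => [le_xy|le_yx] twins.
  by apply: (UCTP_no_twins_lt _ twins); rewrite lt_neqAle neq_xy.
apply: (@UCTP_no_twins_lt y x); first by rewrite lt_neqAle eq_sym neq_xy.
by move=> z zy zx; have [-> ->] := twins z zx zy.
Qed.

End Twins.

Section SaturatedFamilies.
Local Open Scope order_scope.
Variables (d : Order.disp_t) (P : finPOrderType d) (n : nat).
Implicit Types (F : {set {set 'I_n}}) (A B X : {set 'I_n}).

Lemma subset_embedding_inj (f : P -> {set 'I_n}) :
  (forall u v, (u <= v) = (f u \subset f v)) -> injective f.
Proof. by move=> emb u v fuv; apply/le_anti; rewrite !emb fuv subxx. Qed.

Lemma has_induced_copyP F :
  reflect (exists f : {ffun P -> {set 'I_n}},
             (forall u v, (u <= v) = (f u \subset f v)) /\ forall u, f u \in F)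
          (has_induced_copy P F).
Proof.
apply: (iffP existsP) => [[f /and3P[_ /forallP emb /forallP inF]]|[f [emb inF]]].
  by exists f; split=> // u v; apply/eqP/(forallP (emb u)).
exists f; apply/and3P; split; last exact/forallP.
  exact/injectiveP/subset_embedding_inj.
by apply/forallP => u; apply/forallP => v; rewrite emb.
Qed.

Lemma saturated_copy_through F X :
  induced_saturated P F -> X \notin F ->
  exists (f : {ffun P -> {set 'I_n}}) u,
    [/\ forall u v, (u <= v) = (f u \subset f v),
        forall v, v != u -> f v \in F & f u = X].
Proof.
case/andP => /has_induced_copyP noF /forallP satF XnF.
have : has_induced_copy P (X |: F).
  apply: (implyP (satF _)); rewrite properE subsetUr /=.
  by apply: contra XnF => /subsetP; apply; rewrite setU11.
case/has_induced_copyP => f [emb inXF].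
have inj_f := subset_embedding_inj emb.
case: (pickP (fun u => f u == X)) => [u /eqP fu|notX]; last first.
  by case: noF; exists f; split=> // v; have := inXF v; rewrite in_setU1 notX.
exists f, u; split=> // v neq_vu; have := inXF v; rewrite in_setU1.
by case: eqP => //= fv; case/eqP: neq_vu; apply: inj_f; rewrite fv fu.
Qed.

Hypothesis uctp : UCTP P.

Lemma saturated_no_outside_twin F X A :
  induced_saturated P F -> X \notin F -> A \in F ->
  (A \subset X) || (X \subset A) ->
  (forall B, B \in F -> B != A ->
     (B \subset X) = (B \subset A) /\ (X \subset B) = (A \subset B)) ->
  False.
Proof.
move=> sat XnF AF cmp_AX swap.
have [f [u [emb fF fu]]] := saturated_copy_through sat XnF.
have inj_f := subset_embedding_inj emb.
have swap_f v : v != u -> f v != A ->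
    (f v \subset X) = (f v \subset A) /\ (X \subset f v) = (A \subset f v).
  by move=> neq_vu; apply: swap; apply: fF.
case: (pickP (fun w => f w == A)) => [w /eqP fw|notA].
  have neq_uw : u != w by apply: contraNneq XnF => eq_uw; rewrite -fu eq_uw fw.
  apply: (UCTP_no_comparable_twins uctp neq_uw).
    by rewrite /Order.comparable !emb fu fw orbC.
  move=> z neq_zu neq_zw.
  have neq_fzA : f z != A by rewrite -fw (inj_eq inj_f).
  by rewrite !emb fu fw; apply: swap_f.
case/andP: sat => /has_induced_copyP[]; exists [ffun v => if v == u then A else f v].
split=> [v w|v]; rewrite !ffunE; last by case: eqP => [//|/eqP]; apply: fF.
have neq_fA z : f z != A by rewrite notA.
rewrite emb; case: (eqVneq v u) => [->|neq_vu]; case: (eqVneq w u) => [->|neq_wu].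
- by rewrite !subxx.
- by rewrite fu; have [_ ->] := swap_f w neq_wu (neq_fA w).
- by rewrite fu; have [-> _] := swap_f v neq_vu (neq_fA v).
- by [].
Qed.

Hypothesis P2 : (2 <= #|P|)%N.

Lemma saturated_neq0 F : induced_saturated P F -> F != set0.
Proof.
move=> sat; apply: contraTneq P2 => F0.
have set0_notin : set0 \notin F by rewrite F0 inE.
have [f [u [emb fF fu]]] := saturated_copy_through sat set0_notin.
have inj_f := subset_embedding_inj emb.
suff fv0 v : f v = set0.
  rewrite -ltnNge ltnS -(card_codom inj_f) -(cards1 (@set0 'I_n)).
  by apply/subset_leq_card/subsetP => _ /codomP[v ->]; rewrite fv0 set11.
by case: (eqVneq v u) => [->//|/fF]; rewrite F0 inE.
Qed.

(* Take [A] minimal in [F] and remove [i]. *)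
Lemma saturated_avoids F i :
  induced_saturated P F -> exists2 A, A \in F & i \notin A.
Proof.
move=> sat; apply/exists_inP; apply: contraT => /exists_inPn all_i.
have [A /minsetP[AF minA]] := ex_minset (set0Pn _ (saturated_neq0 sat)).
pose X := A :\ i.
have iX : i \notin X by rewrite setD11.
have XnF : X \notin F by apply: contra iX => /all_i; rewrite negbK.
suff [] : False.
apply: (saturated_no_outside_twin sat XnF AF); first by rewrite subD1set orbT.
move=> B BF neq_BA; split.
  rewrite subsetD1 (negPf (all_i _ BF)) andbF.
  by apply/esym/negP => /(minA _ BF) eq_BA; rewrite eq_BA eqxx in neq_BA.
apply/idP/idP => [sub_XB|/(subset_trans (subD1set A i))//].
rewrite -{1}(setD1K (negbNE (all_i _ AF))) subUset sub1set sub_XB andbT.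
exact: negbNE (all_i _ BF).
Qed.

(* Take [A] maximal among the members avoiding [i] and add [i]. *)
Lemma saturated_separates F i j :
  induced_saturated P F -> i != j -> exists2 A, A \in F & (i \in A) != (j \in A).
Proof.
move=> sat neq_ij; apply/exists_inP; apply: contraT => /exists_inPn /= nsep.
have {}nsep B : B \in F -> (i \in B) = (j \in B) by move=> /nsep /negbNE /eqP.
have [A /maxsetP[/andP[AF iA] maxA]] :
    {A | maxset [pred B | (B \in F) && (i \notin B)] A}.
  by apply: ex_maxset; have [A AF iA] := saturated_avoids i sat; exists A; apply/andP.
have jA : j \notin A by rewrite -nsep.
pose X := i |: A.
have jX : j \notin X by rewrite in_setU1 (negPf jA) orbF eq_sym.
have XnF : X \notin F by apply: contra jX => /nsep <-; rewrite setU11.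
suff [] : False.
apply: (saturated_no_outside_twin sat XnF AF); first by rewrite subsetU1.
move=> B BF neq_BA; split.
  apply/idP/idP => [sub_BX|sub_BA]; last exact: subset_trans sub_BA (subsetU1 i A).
  have iB : i \notin B.
    by rewrite (nsep _ BF); apply: contra jX => jB; apply: (subsetP sub_BX).
  by rewrite -(setU1K iA) subsetD1 sub_BX.
apply/idP/idP => [|sub_AB]; first by apply/subset_trans; apply: subsetU1.
rewrite subUset sub1set sub_AB andbT; apply: contraR neq_BA => iB.
by rewrite (maxA B) ?inE ?BF.
Qed.

End SaturatedFamilies.

Lemma card_le_exp_separating (T : finType) (F : {set {set T}}) :
  (forall i j, i != j -> exists2 A, A \in F & (i \in A) != (j \in A)) ->
  #|T| <= 2 ^ #|F|.
Proof.
move=> sep; pose trace i := [set A in F | i \in A].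
have inj_trace : injective trace.
  move=> i j eq_tr; apply/eqP; apply: contraT => /sep[A AF].
  have : (A \in trace i) = (A \in trace j) by rewrite eq_tr.
  by rewrite !inE AF /= => ->; rewrite eqxx.
rewrite -card_powerset -(card_codom inj_trace).
apply/subset_leq_card/subsetP => _ /codomP[i ->].
by rewrite powersetE; apply/subsetP => A; rewrite inE => /andP[].
Qed.

Lemma up_log_le_saturated d (P : finPOrderType d) n (F : {set {set 'I_n}}) :
  2 <= #|P| -> UCTP P -> induced_saturated P F -> up_log 2 n <= #|F|.
Proof.
move=> P2 uctp sat; apply: up_log_min => //.
have := card_le_exp_separating (fun i j => saturated_separates uctp P2 (i:=i) (j:=j) sat).
by rewrite card_ord.
Qed.

Theorem theorem1p9 (d : Order.disp_t) (P : finPOrderType d) :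
  2 <= #|P| -> UCTP P ->
  forall n : nat, 2 <= n -> up_log 2 n <= isat P n.
Proof.
move=> P2 uctp n _; apply: (big_ind (fun m => up_log 2 n <= m)).
- apply: up_log_min => //; apply: leq_trans (ltnW (ltn_expl n (ltnSn 1))) _.
  exact/ltnW/ltn_expl.
- by move=> a b le_a le_b; rewrite leq_min le_a le_b.
- by move=> F; exact: up_log_le_saturated.
Qed.
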